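(* Let $(M^n,c,v^m d\nu)$ be a smooth conformal measure space with characteristic constant $\mu$, $n\ge3$, $m\in\mathbb{R}\setminus\{-n,1-n,2-n\}$. For every $w\in\mathbb{R}$ and $\sigma\in\mathcal{E}[w]$, $$(n+2w-2)\mathbb{D}^W\sigma-(m+n+2w-2)\mathbb{D}\sigma=-mv^{-1}\Big\langle\mathbb{D}\sigma,\ J+\frac{\mu-(m-1)|J|^2}{2(m+n-1)v}X\Big\rangle X.$$ In particular, $\mathbb{D}^W$ is a well-defined operator $\mathcal{E}[w]\to\mathcal{T}[w-1]$ (independent of the choice of scale).
   Context: Conformal setting: $(M^n,c)$ a manifold with a conformal class of Riemannian metrics. $\mathcal{E}[w]$: conformal densities of weight $w$ (functions in a scale $g\in c$, multiplied by $e^{ws}$ under $g\mapsto e^{2s}g$). Standard tractor bundle $\mathbb{T}$: in a scale $\mathbb{T}\cong\mathbb{R}\oplus TM\oplus\mathbb{R}$, tractor $I$ with top $\sigma$, middle $\omega$, bottom $\rho$, transforming as $\sigma\mapsto e^{s}\sigma$, $\omega\mapsto e^{-s}(\omega+\sigma\nabla s)$, $\rho\mapsto e^{-s}(\rho-g(\nabla s,\omega)-\tfrac12|\nabla s|^2\sigma)$; $\mathcal{T}[w]$ denotes weight-$w$ tractor sections. Tractor metric $\langle I,I\rangle=2\sigma\rho+|\omega|_g^2$. $X\in\mathcal{T}[1]$: top and middle $0$, bottom $1$. Schouten $P=\frac1{n-2}(\mathrm{Ric}-\mathrm{J}g)$, $\mathrm{J}=\operatorname{tr}P$. Tractor-$D$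 $\mathbb{D}:\mathcal{E}[w]\to\mathcal{T}[w-1]$: top $w(n+2w-2)u$, middle $(n+2w-2)\nabla u$, bottom $-(\Delta u+w\mathrm{J}u)$ (scale-independent). SCMS: positive $v\in\mathcal{E}[1]$, $m\in\mathbb{R}$, fixed constant $\mu$; in a scale $v$ is a positive function. $\Delta_\phi u=\Delta u+mv^{-1}g(\nabla v,\nabla u)$, $R^m_\phi=R-2mv^{-1}\Delta v-m(m-1)v^{-2}|\nabla v|^2$, $\mathrm{J}^W=\frac{1}{2(m+n-1)}(R^m_\phi+m\mu v^{-2})$. $J=\frac1n\mathbb{D}v$. The $W$-tractor-$D$ operator is defined in each scale by: $\mathbb{D}^Wu$ has top $w(m+n+2w-2)u$, middle $(m+n+2w-2)\nabla u$, bottom $-(\Delta_\phi u+w\mathrm{J}^Wu)$. *)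

(* Local-coordinate (chart) rendering of
   Riemannian/conformal geometry on an open set U of R^n. *)
From HB Require Import structures.
From mathcomp Require Import all_boot all_order all_algebra.
From mathcomp Require Import all_classical all_reals all_analysis.
Set Implicit Arguments. Unset Strict Implicit. Unset Printing Implicit Defensive.
Import Order.TTheory GRing.Theory Num.Theory.
Import numFieldNormedType.Exports.
Local Open Scope classical_set_scope.
Local Open Scope ring_scope.

Section Geometry.
Context {R : realType} {n : nat}.

Definition ecoord (i : 'I_n) : 'rV[R]_n := delta_mx 0 i.
Definition pd (i : 'I_n) (f : 'rV[R]_n -> R) : 'rV[R]_n -> R :=
  fun x => ('D_(ecoord i) f) x.
Definition iterpd (l : seq 'I_n) (f : 'rV[R]_n -> R) := foldr pd f l.
Definition smooth_on (U : set 'rV[R]_n) (f : 'rV[R]_n -> R) :=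
  forall (l : seq 'I_n) (x : 'rV[R]_n), U x -> differentiable (iterpd l f) x.

Definition is_metric_on (U : set 'rV[R]_n) (g : 'rV[R]_n -> 'M[R]_n) :=
  (forall i j, smooth_on U (fun x => g x i j)) /\
  (forall x, U x -> (g x)^T = g x /\
     forall y : 'rV[R]_n, y != 0 -> 0 < (y *m g x *m y^T) 0 0).

Definition ginv (g : 'rV[R]_n -> 'M[R]_n) x := invmx (g x).

Definition christoffel g (k i j : 'I_n) (x : 'rV[R]_n) : R :=
  2^-1 * \sum_(l < n) ginv g x k l *
    (pd i (fun y => g y j l) x + pd j (fun y => g y i l) x
     - pd l (fun y => g y i j) x).

Definition ricci g (i j : 'I_n) (x : 'rV[R]_n) : R :=
  \sum_(k < n) (pd k (christoffel g k i j) x - pd j (christoffel g k i k) x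
    + \sum_(l < n) (christoffel g k k l x * christoffel g l i j x
                    - christoffel g k j l x * christoffel g l i k x)).

Definition scal g x : R := \sum_(i < n) \sum_(j < n) ginv g x i j * ricci g i j x.

(* J = tr_g P with P = (Ric - J g)/(n-2); solving gives J = R/(2(n-1)) *)
Definition Jsc g x : R := scal g x / (2 * (n%:R - 1)).

Definition grad g (u : 'rV[R]_n -> R) x : 'rV[R]_n :=
  \row_i \sum_(j < n) ginv g x i j * pd j u x.
Definition gip (g : 'rV[R]_n -> 'M[R]_n) x (a b : 'rV[R]_n) : R :=
  (a *m g x *m b^T) 0 0.
Definition lap g (u : 'rV[R]_n -> R) x : R :=
  \sum_(i < n) \sum_(j < n) ginv g x i j *
    (pd i (pd j u) x - \sum_(k < n) christoffel g k i j x * pd k u x).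

(* standard tractors in a scale: top, middle (tangent vector), bottom *)
Record tractor := Tractor { ttop : R; tmid : 'rV[R]_n; tbot : R }.
Definition tadd (I J : tractor) :=
  Tractor (ttop I + ttop J) (tmid I + tmid J) (tbot I + tbot J).
Definition tscale (a : R) (I : tractor) :=
  Tractor (a * ttop I) (a *: tmid I) (a * tbot I).
Definition tsub (I J : tractor) := tadd I (tscale (-1) J).
Definition tmetric g x (I J : tractor) : R :=
  ttop I * tbot J + tbot I * ttop J + gip g x (tmid I) (tmid J).
Definition tX : tractor := Tractor 0 0 1.

Definition tD g (w : R) (u : 'rV[R]_n -> R) x : tractor :=
  Tractor (w * (n%:R + 2 * w - 2) * u x)
          ((n%:R + 2 * w - 2) *: grad g u x)
          (- (lap g u x + w * Jsc g x * u x)).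

Definition lapphi g (m : R) (v u : 'rV[R]_n -> R) x : R :=
  lap g u x + m / v x * gip g x (grad g v x) (grad g u x).
Definition Rphi g (m : R) (v : 'rV[R]_n -> R) x : R :=
  scal g x - 2 * m / v x * lap g v x
  - m * (m - 1) / (v x ^+ 2) * gip g x (grad g v x) (grad g v x).
Definition JW g (m mu : R) v x : R :=
  (Rphi g m v x + m * mu / (v x ^+ 2)) / (2 * (m + n%:R - 1)).

Definition tDW g (m mu : R) v (w : R) (u : 'rV[R]_n -> R) x : tractor :=
  Tractor (w * (m + n%:R + 2 * w - 2) * u x)
          ((m + n%:R + 2 * w - 2) *: grad g u x)
          (- (lapphi g m v u x + w * JW g m mu v x * u x)).

Definition Jtr g v x : tractor := tscale (n%:R)^-1 (tD g 1 v x).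

Definition conf_metric (g : 'rV[R]_n -> 'M[R]_n) (s : 'rV[R]_n -> R) x :=
  expR (2 * s x) *: g x.

(* components in the scale e^{2s} g of a weight-wt tractor with components I
   in the scale g *)
Definition tractor_rescale g (s : 'rV[R]_n -> R) (wt : R) (I : tractor) x :=
  tscale (expR (wt * s x))
    (Tractor (expR (s x) * ttop I)
             (expR (- s x) *: (tmid I + ttop I *: grad g s x))
             (expR (- s x) * (tbot I - gip g x (grad g s x) (tmid I)
                 - 2^-1 * gip g x (grad g s x) (grad g s x) * ttop I))).
End Geometry.

(* In a fixed scale the top and middle slots of both sides agree because of the
   choice of the coefficients n + 2w - 2 and m + n + 2w - 2, and the bottom slots
   agree after expanding R^m_phi, J^W and the tractor pairing with J and X: this is a
   rational identity in v, Delta v, |grad v|^2, g(grad v, grad sigma) and J.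

   Scale independence rests on the transformation laws under g -> e^(2s) g: the
   Christoffel symbols change by delta^k_i s_j + delta^k_j s_i - g_ij s^k, hence
   Delta u -> e^(-2s) (Delta u + (n - 2) g(grad s, grad u)) and
   R -> e^(-2s) (R - 2(n - 1) Delta s - (n - 1)(n - 2) |grad s|^2).  Substituting
   these, together with the Leibniz rules for e^(cs) f, into the definition of D^W
   for v -> e^s v and sigma -> e^(ws) sigma gives the rescaling law of a tractor of
   weight w - 1. *)

From HB Require Import structures.
From mathcomp Require Import all_boot all_order all_algebra.
From mathcomp Require Import all_classical all_reals all_analysis.
From mathcomp Require Import ring lra.
Import Order.TTheory GRing.Theory Num.Theory.
Import numFieldNormedType.Exports.
Local Open Scope classical_set_scope.
Local Open Scope ring_scope.

Section ConformalChangeAlgebra.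
Variables (R : realFieldType) (n : nat).
Local Notation I := 'I_n.
Local Notation δ i j := ((i == j)%:R : R).

Lemma sum_deltaL (a : I) (F : I -> R) : \sum_x δ a x * F x = F a.
Proof.
rewrite (bigD1 a) //= eqxx mul1r big1 ?addr0 // => x xa.
by rewrite eq_sym (negbTE xa) mul0r.
Qed.
Lemma sum_deltaR (a : I) (F : I -> R) : \sum_x δ x a * F x = F a.
Proof. by rewrite -[RHS](sum_deltaL a); apply: eq_bigr => x _; rewrite eq_sym. Qed.
Lemma sum_mul_deltaR (a : I) (F : I -> R) : \sum_x F x * δ x a = F a.
Proof. by rewrite -[RHS](sum_deltaL a); apply: eq_bigr => x _; rewrite mulrC eq_sym. Qed.
Lemma sum_delta_diag : \sum_(x : I) δ x x = n%:R.
Proof. by under eq_bigr do rewrite eqxx; rewrite sumr_const card_ord. Qed.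

Lemma sumr2D (F1 F2 : I -> I -> R) :
  \sum_i \sum_j (F1 i j + F2 i j) = \sum_i \sum_j F1 i j + \sum_i \sum_j F2 i j.
Proof. by rewrite -big_split; apply: eq_bigr => i _; rewrite big_split. Qed.
Lemma sumr2B (F1 F2 : I -> I -> R) :
  \sum_i \sum_j (F1 i j - F2 i j) = \sum_i \sum_j F1 i j - \sum_i \sum_j F2 i j.
Proof. by rewrite -sumrB; apply: eq_bigr => i _; rewrite sumrB. Qed.

Lemma sumr2N (F : I -> I -> R) :
  \sum_i \sum_j - F i j = - \sum_i \sum_j F i j.
Proof. by rewrite -sumrN; apply: eq_bigr => i _; rewrite sumrN. Qed.

(* Pointwise values at a fixed point of a chart: [G i j = g_ij], [H i j = g^ij],
   [dG k i j = d_k g_ij], [S i = d_i s] and [SS q l = d_q d_l s].  [chr] is the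
   Christoffel symbol, [chr_diff] its change under [g -> e^(2s) g], and [dH],
   [dS_up], [d_chr_diff] are the partial derivatives of [H], [S_up], [chr_diff]. *)
Variables (G H : I -> I -> R) (dG : I -> I -> I -> R) (S : I -> R) (SS : I -> I -> R).
Hypothesis GS : forall i j, G i j = G j i.
Hypothesis HS : forall i j, H i j = H j i.
Hypothesis HG : forall a b, \sum_c H a c * G c b = δ a b.
Hypothesis dGS : forall k i j, dG k i j = dG k j i.

Definition chr k i j := 2^-1 * \sum_l H k l * (dG i j l + dG j i l - dG l i j).
Definition dH k a b := - \sum_c \sum_e H a c * dG k c e * H e b.
Definition S_up k := \sum_l H k l * S l.
Definition chr_diff k i j := δ k i * S j + δ k j * S i - G i j * S_up k.
Definition dS_up q k := \sum_l (dH q k l * S l + H k l * SS q l).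
Definition d_chr_diff q k i j :=
  δ k i * SS q j + δ k j * SS q i - (dG q i j * S_up k + G i j * dS_up q k).
Definition trdG l := \sum_i \sum_j H i j * dG l i j.
Definition chr_contr l := \sum_i \sum_j H i j * chr l i j.
Definition S_norm2 := \sum_k S k * S_up k.
Definition trdG_S := \sum_l trdG l * S_up l.
Definition chr_contr_S := \sum_k chr_contr k * S k.
Definition trSS := \sum_i \sum_j H i j * SS i j.
Definition div_S_up := \sum_k dS_up k k.
Definition dG_S_up := \sum_i \sum_j \sum_l H i j * dG i j l * S_up l.

Lemma G_H a b : \sum_c G a c * H c b = δ a b.
Proof.
rewrite (eq_sym a) -HG; apply: eq_bigr => c _; rewrite mulrC GS HS //.
Qed.

Lemma G_S_up l : \sum_k G l k * S_up k = S l.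
Proof.
rewrite -[RHS](sum_deltaL l).
under [RHS]eq_bigr do rewrite -G_H mulr_suml.
rewrite exchange_big /=; apply: eq_bigr => k _; rewrite /S_up mulr_sumr.
by apply: eq_bigr => m _; rewrite mulrA.
Qed.

Lemma G_S_up' l : \sum_k G k l * S_up k = S l.
Proof. by rewrite -G_S_up; apply: eq_bigr => k _; rewrite GS. Qed.

Lemma tr_H_G : \sum_i \sum_j H i j * G i j = n%:R.
Proof.
rewrite -sum_delta_diag; apply: eq_bigr => i _; rewrite -HG.
by apply: eq_bigr => j _; rewrite (GS i j).
Qed.

Lemma chr_diff_tr12 l : \sum_k chr_diff k k l = n%:R * S l.
Proof.
rewrite /chr_diff sumrB big_split /= -mulr_suml sum_delta_diag sum_deltaR G_S_up'; ring.
Qed.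

Lemma chr_diff_tr13 i : \sum_l chr_diff l i l = n%:R * S i.
Proof.
rewrite /chr_diff sumrB big_split /= -mulr_suml sum_delta_diag sum_deltaR G_S_up; ring.
Qed.

Lemma H_S j : \sum_i H i j * S i = S_up j.
Proof. by apply: eq_bigr => i _; rewrite HS. Qed.

Lemma chr_diff_contr l : \sum_i \sum_j H i j * chr_diff l i j = (2 - n%:R) * S_up l.
Proof.
transitivity (\sum_i \sum_j (δ l i * (H i j * S j) + δ l j * (H i j * S i)
   - H i j * G i j * S_up l)).
  by apply: eq_bigr => i _; apply: eq_bigr => j _; rewrite /chr_diff; ring.
rewrite sumr2B sumr2D.
have p1 : \sum_i \sum_j δ l i * (H i j * S j) = S_up l.
  by under eq_bigr do rewrite -mulr_sumr; rewrite sum_deltaL.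
have p2 : \sum_i \sum_j δ l j * (H i j * S i) = S_up l.
  by under eq_bigr do rewrite sum_deltaL; rewrite H_S.
rewrite p1 p2 (_ : \sum_i \sum_j H i j * G i j * S_up l = n%:R * S_up l); first ring.
by rewrite -tr_H_G mulr_suml; apply: eq_bigr => i _; rewrite mulr_suml.
Qed.

Lemma chrC k i j : chr k i j = chr k j i.
Proof. by rewrite /chr; congr (_ * _); apply: eq_bigr => l _; rewrite (dGS l i j); ring. Qed.

Lemma chr_tr12 l : \sum_k chr k k l = 2^-1 * trdG l.
Proof.
rewrite /chr -mulr_sumr; congr (_ * _).
transitivity (\sum_k \sum_m (H k m * dG l k m + H k m * dG k l m - H k m * dG m k l)).
  by apply: eq_bigr => k _; apply: eq_bigr => m _; ring.
rewrite sumr2B sumr2D.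
have -> : \sum_k \sum_m H k m * dG k l m = \sum_k \sum_m H k m * dG m k l.
  by rewrite exchange_big; apply: eq_bigr => m _; apply: eq_bigr => k _; rewrite HS dGS.
by rewrite addrK.
Qed.

Lemma chr_tr13 l : \sum_k chr k l k = 2^-1 * trdG l.
Proof. by rewrite -chr_tr12; apply: eq_bigr => k _; rewrite chrC. Qed.

Lemma contr_big_factor (X : I -> I -> R) (Y : I -> I -> I -> R) :
  \sum_i \sum_j H i j * \sum_k \sum_l X k l * Y l i j
  = \sum_l (\sum_k X k l) * (\sum_i \sum_j H i j * Y l i j).
Proof.
transitivity (\sum_i \sum_j \sum_l \sum_k H i j * X k l * Y l i j).
  apply: eq_bigr => i _; apply: eq_bigr => j _; rewrite exchange_big mulr_sumr.
  by apply: eq_bigr => l _; rewrite mulr_sumr; apply: eq_bigr => k _; rewrite mulrA.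
transitivity (\sum_l \sum_i \sum_j \sum_k H i j * X k l * Y l i j).
  by under eq_bigr => i _ do rewrite exchange_big; rewrite exchange_big.
apply: eq_bigr => l _; rewrite [RHS]mulr_suml.
under [RHS]eq_bigr do rewrite mulr_sumr; rewrite [RHS]exchange_big.
apply: eq_bigr => i _; under [RHS]eq_bigr do rewrite mulr_sumr.
rewrite [RHS]exchange_big; apply: eq_bigr => j _.
by apply: eq_bigr => k _; ring.
Qed.

Lemma contr_chr_tr_diff : \sum_i \sum_j H i j * \sum_k \sum_l chr k k l * chr_diff l i j
  = (2 - n%:R) * 2^-1 * trdG_S.
Proof.
rewrite contr_big_factor /trdG_S mulr_sumr; apply: eq_bigr => l _.
by rewrite chr_tr12 chr_diff_contr; ring.
Qed.

Lemma contr_diff_tr_chr : \sum_i \sum_j H i j * \sum_k \sum_l chr_diff k k l * chr l i j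
  = n%:R * chr_contr_S.
Proof.
rewrite contr_big_factor /chr_contr_S mulr_sumr; apply: eq_bigr => l _.
by rewrite chr_diff_tr12 /chr_contr; ring.
Qed.

Lemma contr_diff_tr_diff : \sum_i \sum_j H i j * \sum_k \sum_l chr_diff k k l * chr_diff l i j
  = n%:R * (2 - n%:R) * S_norm2.
Proof.
rewrite contr_big_factor /S_norm2 mulr_sumr; apply: eq_bigr => l _.
by rewrite chr_diff_tr12 chr_diff_contr; ring.
Qed.

Lemma H_G_contr (F : I -> R) j : \sum_i H i j * \sum_k G i k * F k = F j.
Proof.
rewrite -[RHS](sum_deltaL j).
under eq_bigr do rewrite mulr_sumr.
rewrite exchange_big; apply: eq_bigr => k _.
rewrite -HG mulr_suml; apply: eq_bigr => i _; by rewrite (HS i j) mulrA.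
Qed.

Lemma H_G_contr' (F : I -> R) i : \sum_j H i j * \sum_l G j l * F l = F i.
Proof.
rewrite -[RHS](H_G_contr F i); apply: eq_bigr => j _; by rewrite HS.
Qed.

Lemma chr_contr_SE : \sum_i \sum_j H i j * \sum_k chr k i j * S k = chr_contr_S.
Proof.
rewrite /chr_contr_S /chr_contr; under [RHS]eq_bigr do rewrite mulr_suml.
rewrite [RHS]exchange_big; apply: eq_bigr => i _.
under [RHS]eq_bigr do rewrite mulr_suml.
rewrite [RHS]exchange_big; apply: eq_bigr => j _.
by rewrite mulr_sumr; apply: eq_bigr => k _; rewrite mulrA.
Qed.

Lemma S_norm2E : \sum_i \sum_j H i j * (S i * S j) = S_norm2.
Proof.
rewrite /S_norm2 /S_up; apply: eq_bigr => i _; rewrite mulr_sumr.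
by apply: eq_bigr => j _; ring.
Qed.

Lemma contr_chr_diff_cross :
  \sum_i \sum_j H i j * \sum_k \sum_l chr k j l * chr_diff l i k = chr_contr_S.
Proof.
have e : forall i j, \sum_k \sum_l chr k j l * chr_diff l i k =
   \sum_k chr k i j * S k + (\sum_k chr k j k) * S i
   - \sum_k G i k * (\sum_l chr k j l * S_up l).
  move=> i j.
  transitivity (\sum_k \sum_l (δ l i * (chr k j l * S k) + δ l k * (chr k j l * S i)
     - G i k * (chr k j l * S_up l))).
    by apply: eq_bigr => k _; apply: eq_bigr => l _; rewrite /chr_diff; ring.
  rewrite sumr2B sumr2D.
  under eq_bigr do rewrite sum_deltaR.
  under [X in _ + X - _]eq_bigr do rewrite sum_deltaR.
  under [X in _ - X]eq_bigr do rewrite -mulr_sumr.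
  rewrite -mulr_suml; congr (_ + _ - _); apply: eq_bigr => k _; by rewrite chrC.
under eq_bigr do under eq_bigr do rewrite e mulrBr mulrDr.
rewrite sumr2B sumr2D chr_contr_SE [X in _ - X]exchange_big.
under [X in _ - X]eq_bigr do rewrite H_G_contr.
have -> : \sum_i \sum_j H i j * ((\sum_k chr k j k) * S i) = \sum_j 2^-1 * trdG j * S_up j.
  rewrite exchange_big; apply: eq_bigr => j _; rewrite -H_S mulr_sumr.
  by apply: eq_bigr => i _; rewrite chr_tr13; ring.
have -> : \sum_j \sum_l chr j j l * S_up l = \sum_j 2^-1 * trdG j * S_up j.
  rewrite exchange_big; apply: eq_bigr => l _; rewrite -mulr_suml chr_tr12; ring.
ring.
Qed.

Lemma contr_diff_chr_cross :
  \sum_i \sum_j H i j * \sum_k \sum_l chr_diff k j l * chr l i k = chr_contr_S.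
Proof.
have e : forall i j, \sum_k \sum_l chr_diff k j l * chr l i k =
   \sum_l chr l i j * S l + S j * (\sum_k chr k i k)
   - \sum_l G j l * (\sum_k S_up k * chr l i k).
  move=> i j.
  transitivity (\sum_l \sum_k (δ k j * (S l * chr l i k) + δ k l * (S j * chr l i k)
     - G j l * (S_up k * chr l i k))).
    rewrite exchange_big.
    by apply: eq_bigr => l _; apply: eq_bigr => k _; rewrite /chr_diff; ring.
  rewrite sumr2B sumr2D.
  under eq_bigr do rewrite sum_deltaR.
  under [X in _ + X - _]eq_bigr do rewrite sum_deltaR.
  under [X in _ - X]eq_bigr do rewrite -mulr_sumr.
  rewrite -mulr_sumr; congr (_ + _ - _); apply: eq_bigr => k _; by rewrite mulrC.
under eq_bigr do under eq_bigr do rewrite e mulrBr mulrDr.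
rewrite sumr2B sumr2D chr_contr_SE.
under [X in _ - X]eq_bigr do rewrite H_G_contr'.
have -> : \sum_i \sum_j H i j * (S j * \sum_k chr k i k) = \sum_i 2^-1 * trdG i * S_up i.
  apply: eq_bigr => i _; rewrite chr_tr13 /S_up [RHS]mulr_sumr.
  by apply: eq_bigr => j _; ring.
have -> : \sum_i \sum_k S_up k * chr i i k = \sum_k 2^-1 * trdG k * S_up k.
  rewrite exchange_big; apply: eq_bigr => k _; rewrite -mulr_sumr chr_tr12; ring.
ring.
Qed.

Lemma S_chr_diff i j : \sum_l S l * chr_diff l i j = 2 * (S i * S j) - G i j * S_norm2.
Proof.
transitivity (\sum_l (δ l i * (S l * S j) + δ l j * (S l * S i) - G i j * (S l * S_up l))).
  by apply: eq_bigr => l _; rewrite /chr_diff; ring.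
rewrite sumrB big_split /= !sum_deltaR -mulr_sumr /S_norm2; ring.
Qed.

Lemma S_up_chr_diff l i : \sum_k S_up k * chr_diff l i k = δ l i * S_norm2.
Proof.
transitivity (\sum_k (δ l i * (S k * S_up k) + δ l k * (S_up k * S i)
   - (G i k * S_up k) * S_up l)).
  by apply: eq_bigr => k _; rewrite /chr_diff; ring.
rewrite sumrB big_split /= sum_deltaL -mulr_sumr -mulr_suml G_S_up /S_norm2; ring.
Qed.

Lemma contr_diff_diff_cross : \sum_i \sum_j H i j * \sum_k \sum_l chr_diff k j l * chr_diff l i k
  = (2 - n%:R) * S_norm2.
Proof.
have e : forall i j, \sum_k \sum_l chr_diff k j l * chr_diff l i k =
    (n%:R + 2) * (S i * S j) - 2 * G i j * S_norm2.
  move=> i j; rewrite exchange_big /=.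
  transitivity (\sum_l (S l * chr_diff l i j + S j * chr_diff l i l - G j l * (δ l i * S_norm2))).
    apply: eq_bigr => l _; rewrite -S_up_chr_diff mulr_sumr.
    transitivity (\sum_k (δ k j * (S l * chr_diff l i k) + δ k l * (S j * chr_diff l i k)
       - G j l * (S_up k * chr_diff l i k))).
      by apply: eq_bigr => k _; rewrite /chr_diff; ring.
    by rewrite sumrB big_split /= !sum_deltaR.
  rewrite sumrB big_split /= S_chr_diff -mulr_sumr chr_diff_tr13.
  under eq_bigr do rewrite mulrA.
  rewrite -mulr_suml sum_mul_deltaR (GS j i); ring.
under eq_bigr do under eq_bigr do rewrite e.
transitivity (\sum_i \sum_j ((n%:R + 2) * (H i j * (S i * S j)) - 2 * S_norm2 * (H i j * G i j))).
  by apply: eq_bigr => i _; apply: eq_bigr => j _; ring.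
rewrite sumr2B.
under eq_bigr do rewrite -mulr_sumr.
under [X in _ - X]eq_bigr do rewrite -mulr_sumr.
rewrite -!mulr_sumr S_norm2E tr_H_G; ring.
Qed.

Lemma trdG_SE : \sum_i \sum_j H i j * \sum_k dG k i j * S_up k = trdG_S.
Proof.
rewrite /trdG_S /trdG; under [RHS]eq_bigr do rewrite mulr_suml.
rewrite [RHS]exchange_big; apply: eq_bigr => i _.
under [RHS]eq_bigr do rewrite mulr_suml.
rewrite [RHS]exchange_big; apply: eq_bigr => j _.
by rewrite mulr_sumr; apply: eq_bigr => k _; rewrite mulrA.
Qed.

Lemma trSSC : \sum_i \sum_j H i j * SS j i = trSS.
Proof.
rewrite /trSS exchange_big; apply: eq_bigr => j _; apply: eq_bigr => i _.
by rewrite HS.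
Qed.

Lemma contr_div_d_chr_diff : \sum_i \sum_j H i j * \sum_k d_chr_diff k k i j
  = 2 * trSS - trdG_S - n%:R * div_S_up.
Proof.
have e : forall i j, \sum_k d_chr_diff k k i j =
    SS i j + SS j i - \sum_k dG k i j * S_up k - G i j * div_S_up.
  move=> i j; rewrite /d_chr_diff /div_S_up sumrB !big_split /= !sum_deltaR -mulr_sumr; ring.
under eq_bigr do under eq_bigr do rewrite e.
transitivity (\sum_i \sum_j (H i j * SS i j + H i j * SS j i
   - H i j * \sum_k dG k i j * S_up k - div_S_up * (H i j * G i j))).
  by apply: eq_bigr => i _; apply: eq_bigr => j _; ring.
rewrite !sumr2B sumr2D trSSC trdG_SE.
under [X in _ - X]eq_bigr do rewrite -mulr_sumr.
rewrite -mulr_sumr tr_H_G -/trSS; ring.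
Qed.

Lemma G_dH i j l : \sum_k G i k * dH j k l = - \sum_e dG j i e * H e l.
Proof.
rewrite /dH; under eq_bigr do rewrite mulrN.
rewrite sumrN; congr (- _).
transitivity (\sum_c \sum_e (\sum_k G i k * H k c) * dG j c e * H e l).
  under eq_bigr do rewrite mulr_sumr.
  rewrite exchange_big; apply: eq_bigr => c _.
  under eq_bigr do rewrite mulr_sumr.
  rewrite exchange_big; apply: eq_bigr => e _.
  by rewrite !mulr_suml; apply: eq_bigr => k _; ring.
under eq_bigr do under eq_bigr do rewrite G_H.
rewrite exchange_big; apply: eq_bigr => e _.
by rewrite -mulr_suml sum_deltaL.
Qed.

Lemma G_dS_up i j : \sum_k G i k * dS_up j k = SS j i - \sum_e dG j i e * S_up e.
Proof.
transitivity (\sum_l ((\sum_k G i k * dH j k l) * S l + (\sum_k G i k * H k l) * SS j l)).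
  rewrite /dS_up; under eq_bigr do rewrite mulr_sumr.
  rewrite exchange_big; apply: eq_bigr => l _.
  by rewrite !mulr_suml -big_split; apply: eq_bigr => k _; rewrite /= mulrDr !mulrA.
rewrite big_split /=; under [X in _ + X]eq_bigr do rewrite G_H.
rewrite sum_deltaL addrC; congr (_ + _).
under eq_bigr do rewrite G_dH mulNr mulr_suml.
rewrite sumrN; congr (- _).
rewrite exchange_big; apply: eq_bigr => e _; rewrite /S_up mulr_sumr.
by apply: eq_bigr => l _; ring.
Qed.

Lemma contr_tr_d_chr_diff : \sum_i \sum_j H i j * \sum_k d_chr_diff j k i k = n%:R * trSS.
Proof.
have e : forall i j, \sum_k d_chr_diff j k i k = n%:R * SS j i.
  move=> i j; rewrite /d_chr_diff sumrB !big_split /= G_dS_up sum_deltaR.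
  by rewrite -mulr_suml sum_delta_diag; ring.
under eq_bigr do under eq_bigr do rewrite e.
rewrite -trSSC mulr_sumr; apply: eq_bigr => i _; rewrite mulr_sumr.
by apply: eq_bigr => j _; ring.
Qed.

Lemma div_S_upE : div_S_up = trSS - dG_S_up.
Proof.
rewrite /div_S_up /dS_up.
under eq_bigr do rewrite big_split /=.
rewrite big_split /= addrC; congr (_ + _).
rewrite /dG_S_up -sumrN; apply: eq_bigr => k _.
under eq_bigr do rewrite /dH mulNr mulr_suml.
rewrite sumrN; congr (- _).
rewrite exchange_big; apply: eq_bigr => c _.
under eq_bigr do rewrite mulr_suml.
rewrite exchange_big; apply: eq_bigr => e _.
by rewrite /S_up mulr_sumr; apply: eq_bigr => l _; ring.
Qed.

Lemma chr_S i j : \sum_k chr k i j * S k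
  = 2^-1 * \sum_l (dG i j l + dG j i l - dG l i j) * S_up l.
Proof.
rewrite /chr; under eq_bigr do rewrite -mulrA.
rewrite -mulr_sumr; congr (_ * _).
under eq_bigr do rewrite mulr_suml.
rewrite exchange_big; apply: eq_bigr => l _.
rewrite -H_S mulr_sumr; apply: eq_bigr => k _; ring.
Qed.

Lemma chr_contr_S_split : chr_contr_S = dG_S_up - 2^-1 * trdG_S.
Proof.
rewrite -chr_contr_SE.
have e : forall i j, H i j * \sum_k chr k i j * S k = 2^-1 * (
   \sum_l H i j * dG i j l * S_up l + \sum_l H i j * dG j i l * S_up l
   - H i j * \sum_l dG l i j * S_up l).
  move=> i j; rewrite chr_S.
  rewrite (_ : \sum_l (dG i j l + dG j i l - dG l i j) * S_up l =
     \sum_l dG i j l * S_up l + \sum_l dG j i l * S_up l - \sum_l dG l i j * S_up l).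
    have h1 : forall a b, \sum_l H i j * dG a b l * S_up l = H i j * \sum_l dG a b l * S_up l.
      by move=> a b; rewrite mulr_sumr; apply: eq_bigr => l _; ring.
    rewrite !h1; ring.
  by rewrite -big_split -sumrB; apply: eq_bigr => l _; rewrite /=; ring.
under eq_bigr do under eq_bigr do rewrite e.
under eq_bigr do rewrite -mulr_sumr.
rewrite -mulr_sumr sumr2B sumr2D trdG_SE.
have -> : \sum_i \sum_j \sum_l H i j * dG j i l * S_up l = dG_S_up.
  rewrite /dG_S_up exchange_big; apply: eq_bigr => j _; apply: eq_bigr => i _.
  by apply: eq_bigr => l _; rewrite HS.
by rewrite -/dG_S_up; field.
Qed.

Lemma scal_conf_alg :
  \sum_i \sum_j H i j * \sum_k (d_chr_diff k k i j - d_chr_diff j k i k +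
     \sum_l ((chr k k l + chr_diff k k l) * (chr l i j + chr_diff l i j)
            - (chr k j l + chr_diff k j l) * (chr l i k + chr_diff l i k)
            - (chr k k l * chr l i j - chr k j l * chr l i k)))
  = - (2 * (n%:R - 1)) * (\sum_i \sum_j H i j * (SS i j - \sum_k chr k i j * S k))
    - (n%:R - 1) * (n%:R - 2) * S_norm2.
Proof.
transitivity (\sum_i \sum_j (H i j * \sum_k d_chr_diff k k i j - H i j * \sum_k d_chr_diff j k i k
   + H i j * \sum_k \sum_l (chr k k l * chr_diff l i j)
   + H i j * \sum_k \sum_l (chr_diff k k l * chr l i j)
   + H i j * \sum_k \sum_l (chr_diff k k l * chr_diff l i j)
   - H i j * \sum_k \sum_l (chr k j l * chr_diff l i k)
   - H i j * \sum_k \sum_l (chr_diff k j l * chr l i k)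
   - H i j * \sum_k \sum_l (chr_diff k j l * chr_diff l i k))).
  apply: eq_bigr => i _; apply: eq_bigr => j _.
  rewrite big_split sumrB /=.
  rewrite (_ : \sum_k \sum_l ((chr k k l + chr_diff k k l) * (chr l i j + chr_diff l i j)
            - (chr k j l + chr_diff k j l) * (chr l i k + chr_diff l i k)
            - (chr k k l * chr l i j - chr k j l * chr l i k)) =
    \sum_k \sum_l (chr k k l * chr_diff l i j) + \sum_k \sum_l (chr_diff k k l * chr l i j)
   + \sum_k \sum_l (chr_diff k k l * chr_diff l i j) - \sum_k \sum_l (chr k j l * chr_diff l i k)
   - \sum_k \sum_l (chr_diff k j l * chr l i k) - \sum_k \sum_l (chr_diff k j l * chr_diff l i k)).
    ring.
  rewrite -!sumr2D -!sumr2B; apply: eq_bigr => k _; apply: eq_bigr => l _; ring.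
rewrite !sumr2B !sumr2D ?sumr2B sumr2N contr_div_d_chr_diff contr_tr_d_chr_diff.
rewrite contr_chr_tr_diff contr_diff_tr_chr contr_diff_tr_diff.
rewrite contr_chr_diff_cross contr_diff_chr_cross contr_diff_diff_cross.
have -> : \sum_i \sum_j H i j * (SS i j - \sum_k chr k i j * S k) = trSS - chr_contr_S.
  rewrite /trSS -chr_contr_SE -sumr2B; apply: eq_bigr => i _; apply: eq_bigr => j _; ring.
by rewrite div_S_upE chr_contr_S_split; field.
Qed.

Lemma chr_conf_alg (E : R) k i j : E != 0 ->
  2^-1 * \sum_l (E^-1 * H k l) *
    ((E * (2 * S i)) * G j l + E * dG i j l
     + ((E * (2 * S j)) * G i l + E * dG j i l)
     - ((E * (2 * S l)) * G i j + E * dG l i j))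
  = chr k i j + chr_diff k i j.
Proof.
move=> E0.
have HG' : forall a b, \sum_l H a l * G b l = δ a b.
  by move=> a b; rewrite -HG; apply: eq_bigr => l _; rewrite GS.
transitivity (2^-1 * \sum_l H k l * (dG i j l + dG j i l - dG l i j)
   + ((\sum_l H k l * G j l) * S i + (\sum_l H k l * G i l) * S j
      - G i j * \sum_l H k l * S l)).
  rewrite (eq_bigr (fun l => H k l * (dG i j l + dG j i l - dG l i j)
     + 2 * ((H k l * G j l) * S i + (H k l * G i l) * S j - G i j * (H k l * S l)))); last first.
    by move=> l _; field.
  rewrite big_split /= -mulr_sumr sumrB big_split /= -!mulr_suml -mulr_sumr.
  by field.
by rewrite !HG' /chr /chr_diff /S_up; congr (_ + _); ring.
Qed.

Lemma dinv_alg (P dGk : I -> I -> R) :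
  (forall a b, \sum_c P a c * G c b + \sum_c H a c * dGk c b = 0) ->
  forall a b, P a b = - \sum_c \sum_e H a c * dGk c e * H e b.
Proof.
move=> h a b.
have h' : forall c, \sum_x P a x * G x c = - \sum_e H a e * dGk e c.
  by move=> c; apply/eqP; rewrite -addr_eq0; apply/eqP; apply: h.
transitivity (\sum_c (\sum_x P a x * G x c) * H c b).
  rewrite -{1}(sum_mul_deltaR b (P a)).
  under eq_bigr do rewrite -G_H mulr_sumr.
  rewrite exchange_big /=.
  by apply: eq_bigr => c _; rewrite mulr_suml; apply: eq_bigr => x _; ring.
under eq_bigr do rewrite h' mulNr mulr_suml.
rewrite sumrN exchange_big; congr (- _).
Qed.

Lemma contr_chr_diff_vec (Uk : I -> R) :
  \sum_i \sum_j H i j * \sum_k chr_diff k i j * Uk k = (2 - n%:R) * \sum_k S_up k * Uk k.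
Proof.
transitivity (\sum_k Uk k * \sum_i \sum_j H i j * chr_diff k i j).
  under [RHS]eq_bigr do rewrite mulr_sumr.
  rewrite [RHS]exchange_big; apply: eq_bigr => i _.
  under [RHS]eq_bigr do rewrite mulr_sumr.
  rewrite [RHS]exchange_big; apply: eq_bigr => j _.
  by rewrite mulr_sumr; apply: eq_bigr => k _; ring.
rewrite mulr_sumr; apply: eq_bigr => k _; rewrite chr_diff_contr; ring.
Qed.

Lemma lap_exp_mul_alg (E c F : R) (f : I -> R) (ff : I -> I -> R) :
  \sum_i \sum_j H i j * (E * (c ^+ 2 * S i * S j * F + c * S i * f j + c * S j * f i
        + c * F * SS i j + ff i j) - \sum_k chr k i j * (E * (c * S k * F + f k)))
  = E * (c ^+ 2 * S_norm2 * F + 2 * c * \sum_k S_up k * f k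
      + c * F * \sum_i \sum_j H i j * (SS i j - \sum_k chr k i j * S k)
      + \sum_i \sum_j H i j * (ff i j - \sum_k chr k i j * f k)).
Proof.
transitivity (\sum_i \sum_j (E * (c ^+ 2 * F) * (H i j * (S i * S j))
   + E * c * (H i j * (S i * f j)) + E * c * (H i j * (S j * f i))
   + E * c * F * (H i j * (SS i j - \sum_k chr k i j * S k))
   + E * (H i j * (ff i j - \sum_k chr k i j * f k)))).
  apply: eq_bigr => i _; apply: eq_bigr => j _.
  rewrite (_ : \sum_k chr k i j * (E * (c * S k * F + f k)) =
     E * c * F * \sum_k chr k i j * S k + E * \sum_k chr k i j * f k); first ring.
  by rewrite !mulr_sumr -big_split; apply: eq_bigr => k _; rewrite /=; ring.
rewrite !sumr2D.
under eq_bigr do rewrite -mulr_sumr.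
under [X in _ + X + _ + _ + _]eq_bigr do rewrite -mulr_sumr.
under [X in _ + X + _ + _]eq_bigr do rewrite -mulr_sumr.
under [X in _ + X + _]eq_bigr do rewrite -mulr_sumr.
under [X in _ + X]eq_bigr do rewrite -mulr_sumr.
rewrite -!mulr_sumr S_norm2E.
have e1 : \sum_i \sum_j H i j * (S i * f j) = \sum_k S_up k * f k.
  rewrite exchange_big; apply: eq_bigr => j _; rewrite -H_S mulr_suml.
  by apply: eq_bigr => i _; ring.
have e2 : \sum_i \sum_j H i j * (S j * f i) = \sum_k S_up k * f k.
  apply: eq_bigr => i _; rewrite /S_up mulr_suml.
  by apply: eq_bigr => j _; ring.
rewrite e1 e2; ring.
Qed.
End ConformalChangeAlgebra.

Section PartialDerivatives.
Context {R : realType} {n : nat}.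
Local Notation V := 'rV[R]_n.
Implicit Types (f h : V -> R) (x : V).

Definition derivable_at f x := forall v : V, derivable f x v.

Lemma differentiable_derivable_at f x : differentiable f x -> derivable_at f x.
Proof. by move=> df v; apply: diff_derivable. Qed.

Lemma derivable_at_cst (c : R) x : derivable_at (fun _ => c) x.
Proof. by move=> v; apply: derivable_cst. Qed.

Lemma derivable_atD {f h x} :
  derivable_at f x -> derivable_at h x -> derivable_at (fun y => f y + h y) x.
Proof. by move=> df dh v; apply: derivableD. Qed.

Lemma derivable_atN {f x} : derivable_at f x -> derivable_at (fun y => - f y) x.
Proof. by move=> df v; apply: derivableN. Qed.

Lemma derivable_atB {f h x} :
  derivable_at f x -> derivable_at h x -> derivable_at (fun y => f y - h y) x.
Proof. by move=> df dh; apply: derivable_atD => //; apply: derivable_atN. Qed.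

Lemma derivable_atM {f h x} :
  derivable_at f x -> derivable_at h x -> derivable_at (fun y => f y * h y) x.
Proof. by move=> df dh v; apply: derivableM. Qed.

Lemma derivable_atV {f x} :
  f x != 0 -> derivable_at f x -> derivable_at (fun y => (f y)^-1) x.
Proof. by move=> f0 df v; apply: derivableV. Qed.

Lemma near_eq_derivable_at f h x :
  (\forall y \near x, f y = h y) -> derivable_at f x -> derivable_at h x.
Proof. by move=> e df v; apply: near_eq_derivable (df v). Qed.

Lemma derivable_at_sum (I : Type) (r : seq I) (P : pred I) (F : I -> V -> R) x :
  (forall i, P i -> derivable_at (F i) x) ->
  derivable_at (fun y => \sum_(i <- r | P i) F i y) x.
Proof.
move=> dF; rewrite -fct_sumE; elim/big_ind: _ => //.
by move=> a b da db v; apply: derivableD.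
Qed.

Lemma derivable_at_prod (I : Type) (r : seq I) (P : pred I) (F : I -> V -> R) x :
  (forall i, P i -> derivable_at (F i) x) ->
  derivable_at (fun y => \prod_(i <- r | P i) F i y) x.
Proof.
move=> dF; rewrite -fct_prodE; elim/big_ind: _ => //.
by move=> a b da db v; apply: derivableM.
Qed.

Lemma derivable_at_det k (M : V -> 'M[R]_k) x :
  (forall a b, derivable_at (fun y => M y a b) x) ->
  derivable_at (fun y => \det (M y)) x.
Proof.
move=> dM; apply: derivable_at_sum => s _; apply: derivable_atM.
  exact: derivable_at_cst.
by apply: derivable_at_prod => i _; apply: dM.
Qed.

Lemma pdD i {f h x} : derivable_at f x -> derivable_at h x ->
  pd i (fun y => f y + h y) x = pd i f x + pd i h x.
Proof. by move=> df dh; apply: deriveD. Qed.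

Lemma pdN i {f x} : derivable_at f x -> pd i (fun y => - f y) x = - pd i f x.
Proof. by move=> df; apply: deriveN. Qed.

Lemma pdB i {f h x} : derivable_at f x -> derivable_at h x ->
  pd i (fun y => f y - h y) x = pd i f x - pd i h x.
Proof. by move=> df dh; rewrite pdD ?pdN //; apply: derivable_atN. Qed.

Lemma pdM i {f h x} : derivable_at f x -> derivable_at h x ->
  pd i (fun y => f y * h y) x = pd i f x * h x + f x * pd i h x.
Proof.
move=> df dh; rewrite /pd (deriveM (df _) (dh _)).
by rewrite /GRing.scale /= addrC mulrC.
Qed.

Lemma pd_cst i (c : R) x : pd i (fun _ => c) x = 0.
Proof. exact: derive_cst. Qed.

Lemma pdMl i (c : R) {f x} : derivable_at f x -> pd i (fun y => c * f y) x = c * pd i f x.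
Proof. by move=> df; rewrite pdM ?pd_cst ?mul0r ?add0r //; apply: derivable_at_cst. Qed.

Lemma pd_near i f h x : (\forall y \near x, f y = h y) -> pd i f x = pd i h x.
Proof. exact: near_eq_derive. Qed.

Lemma pd_sum i (I : Type) (r : seq I) (P : pred I) (F : I -> V -> R) x :
  (forall j, P j -> derivable_at (F j) x) ->
  pd i (fun y => \sum_(j <- r | P j) F j y) x = \sum_(j <- r | P j) pd i (F j) x.
Proof.
move=> dF; elim: r => [|a r IH].
  by rewrite big_nil; under eq_fun do rewrite big_nil; apply: pd_cst.
rewrite big_cons; under eq_fun do rewrite big_cons.
case: (boolP (P a)) => Pa; last exact: IH.
by rewrite pdD ?IH //; [exact: dF | exact: derivable_at_sum].
Qed.

Lemma differentiable_expRM (c : R) (s : V -> R) x : differentiable s x ->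
  differentiable (fun y => expR (c * s y)) x.
Proof.
move=> ds; apply: (@differentiable_comp _ _ _ _ (fun y => c * s y) expR).
  by apply: differentiableM => //; apply: differentiable_cst.
by apply/derivable1_diffP; apply: derivable_expR.
Qed.

Lemma pd_expRM i (c : R) {s : V -> R} {x} : differentiable s x ->
  pd i (fun y => expR (c * s y)) x = expR (c * s x) * (c * pd i s x).
Proof.
move=> ds.
have dcs : differentiable (fun y => c * s y) x.
  by apply: differentiableM => //; apply: differentiable_cst.
rewrite /pd deriveE; last exact: differentiable_expRM.
rewrite (@diff_comp _ _ _ _ (fun y => c * s y) expR) //; last first.
  by apply/derivable1_diffP; apply: derivable_expR.
rewrite /= deriv1E /=; last exact: derivable_expR.
rewrite derive1E derive_val -deriveE // -/(pd i _ x) pdMl.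
  by rewrite /GRing.scale /= mulrC.
exact: differentiable_derivable_at.
Qed.

End PartialDerivatives.

Section MetricPairing.
Context {R : realType} {n : nat} (g : 'rV[R]_n -> 'M[R]_n) (x : 'rV[R]_n).
Implicit Types (a b c : 'rV[R]_n).

Lemma gipZl k a b : gip g x (k *: a) b = k * gip g x a b.
Proof. by rewrite /gip -!scalemxAl mxE. Qed.

Lemma gipZr k a b : gip g x a (k *: b) = k * gip g x a b.
Proof. by rewrite /gip linearZ /= -scalemxAr mxE. Qed.

Lemma gipDl a b c : gip g x (a + b) c = gip g x a c + gip g x b c.
Proof. by rewrite /gip !mulmxDl mxE. Qed.

Lemma gipDr a b c : gip g x a (b + c) = gip g x a b + gip g x a c.
Proof. by rewrite /gip linearD /= mulmxDr mxE. Qed.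

Lemma gipC a b : (g x)^T = g x -> gip g x a b = gip g x b a.
Proof.
move=> gT; rewrite /gip.
have -> : (a *m g x *m b^T) 0 0 = ((a *m g x *m b^T)^T) 0 0 by rewrite [RHS]mxE.
by rewrite !trmx_mul trmxK gT mulmxA.
Qed.

End MetricPairing.

Lemma tDW_sub_tD {R : realType} {n : nat} g (v sigma : 'rV[R]_n -> R) (m mu w : R) x :
  (3 <= n)%N -> (g x)^T = g x -> 0 < v x -> m != 1 - n%:R ->
  tsub (tscale (n%:R + 2 * w - 2) (tDW g m mu v w sigma x))
       (tscale (m + n%:R + 2 * w - 2) (tD g w sigma x))
  = tscale (- m / v x *
      tmetric g x (tD g w sigma x)
        (tadd (Jtr g v x)
           (tscale ((mu - (m - 1) * tmetric g x (Jtr g v x) (Jtr g v x))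
                    / (2 * (m + n%:R - 1) * v x)) tX))) tX.
Proof.
move=> n3 gT v_gt0 m1.
have n0 : n%:R != 0 :> R by rewrite pnatr_eq0 -lt0n; apply: leq_trans n3.
have n1 : n%:R - 1 != 0 :> R.
  by rewrite subr_eq0 (eqr_nat R n 1); apply: contraTneq n3 => ->.
have mn : m + n%:R - 1 != 0 by apply: contra m1 => /eqP h; apply/eqP; lra.
have v0 : v x != 0 by rewrite gt_eqF.
rewrite /tsub /tadd /tscale /tDW /tD /tX /Jtr /tmetric /=.
congr Tractor.
- by rewrite !mulr0; ring.
- rewrite !scalerA -scalerDl scaler0.
  by rewrite [X in X *: _ = _](_ : _ = 0) ?scale0r //; ring.
rewrite !scaler0 !addr0 !gipZl !gipZr /lapphi /JW /Rphi /Jsc (gipC _ _ (grad g sigma x) _ gT).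
by field; rewrite n0 v0 mn n1.
Qed.

Section ConformalChange.
Context {R : realType} {n : nat} (U : set 'rV[R]_n) (g : 'rV[R]_n -> 'M[R]_n).
Hypothesis oU : open U.
Hypothesis gm : is_metric_on U g.
Local Notation V := 'rV[R]_n.

Definition g_at x := fun i j => g x i j.
Definition ginv_at x := fun i j => ginv g x i j.
Definition dg_at x := fun q i j => pd q (fun z => g z i j) x.
Definition ds_at (s : V -> R) x := fun i => pd i s x.
Definition dds_at (s : V -> R) x := fun q l => pd q (pd l s) x.
Definition grad_comp (s : V -> R) k x := \sum_l ginv g x k l * pd l s x.
Definition chr_diff_fun (s : V -> R) k i j x :=
  (k == i)%:R * pd j s x + (k == j)%:R * pd i s x - g x i j * grad_comp s k x.

Lemma near_U {x} : U x -> \forall y \near x, U y.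
Proof. by move=> Ux; apply: open_nbhs_nbhs; split. Qed.

Lemma g_trmx {x} : U x -> (g x)^T = g x.
Proof. by move=> Ux; have [_ /(_ x Ux) []] := gm. Qed.

Lemma g_sym {x} : U x -> forall i j, g x i j = g x j i.
Proof. by move=> Ux i j; rewrite -{1}(g_trmx Ux) mxE. Qed.

Lemma g_unit {x} : U x -> g x \in unitmx.
Proof.
move=> Ux; have [_ /(_ x Ux) [_ pos]] := gm.
rewrite -row_free_unit -kermx_eq0.
apply/eqP/row_matrixP => i; rewrite row0; apply/eqP/negPn/negP => hz.
have := pos _ hz; rewrite -row_mul mulmx_ker row0 mul0mx mxE.
by rewrite ltxx.
Qed.

Lemma ginv_sym {x} : U x -> forall i j, ginv g x i j = ginv g x j i.
Proof.
move=> Ux i j.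
have ginvT : (invmx (g x))^T = invmx (g x) by rewrite trmx_inv (g_trmx Ux).
by rewrite /ginv -{1}ginvT mxE.
Qed.

Lemma ginv_g {x} : U x -> forall a b, \sum_c ginv g x a c * g x c b = (a == b)%:R.
Proof.
move=> Ux a b; have := mulVmx (g_unit Ux).
by move/(congr1 (fun M : 'M[R]_n => M a b)); rewrite !mxE.
Qed.

Lemma derivable_at_g x i j : U x -> derivable_at (fun z => g z i j) x.
Proof.
by move=> Ux; have [sm _] := gm; apply: differentiable_derivable_at; apply: (sm i j [::]).
Qed.

Lemma derivable_at_pd_g x k i j : U x -> derivable_at (pd k (fun z => g z i j)) x.
Proof.
by move=> Ux; have [sm _] := gm; apply: differentiable_derivable_at; apply: (sm i j [:: k]).
Qed.

Lemma smooth_derivable_at {f : V -> R} {x} : smooth_on U f -> U x -> derivable_at f x.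
Proof. by move=> sm Ux; apply: differentiable_derivable_at; apply: (sm [::]). Qed.

Lemma smooth_pd_derivable_at {f : V -> R} k {x} :
  smooth_on U f -> U x -> derivable_at (pd k f) x.
Proof. by move=> sm Ux; apply: differentiable_derivable_at; apply: (sm [:: k]). Qed.

Lemma derivable_at_ginv x i j : U x -> derivable_at (fun z => ginv g z i j) x.
Proof.
move=> Ux.
apply: (@near_eq_derivable_at _ _ (fun z => (\det (g z))^-1 * cofactor (g z) j i)).
  apply: filterS (near_U Ux) => z Uz.
  by rewrite /ginv /invmx (g_unit Uz) !mxE.
apply: derivable_atM.
  apply: derivable_atV; first by rewrite -unitfE -unitmxE; apply: g_unit.
  by apply: derivable_at_det => a b; apply: derivable_at_g.
apply: derivable_atM; first exact: derivable_at_cst.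
apply: derivable_at_det => a b.
have -> : (fun z => row' j (col' i (g z)) a b) = (fun z => g z (lift j a) (lift i b)).
  by apply: funext => z; rewrite !mxE.
exact: derivable_at_g.
Qed.

Lemma pd_ginv x k a b : U x -> pd k (fun z => ginv g z a b) x =
  - \sum_c \sum_e ginv g x a c * pd k (fun z => g z c e) x * ginv g x e b.
Proof.
move=> Ux.
apply: (@dinv_alg R n (g_at x) (ginv_at x) (g_sym Ux) (ginv_sym Ux) (ginv_g Ux)
   (fun i j => pd k (fun z => ginv g z i j) x) (dg_at x k)) => c e.
have dginv_g f : derivable_at (fun z => ginv g z c f * g z f e) x.
  by apply: derivable_atM; [apply: derivable_at_ginv | apply: derivable_at_g].
transitivity (pd k (fun z => \sum_f ginv g z c f * g z f e) x).
  rewrite pd_sum // -big_split; apply: eq_bigr => f _ /=.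
  by rewrite pdM //; [apply: derivable_at_ginv | apply: derivable_at_g].
rewrite (@pd_near _ _ _ _ (fun _ => (c == e)%:R)) ?pd_cst //.
by apply: filterS (near_U Ux) => z Uz; apply: ginv_g.
Qed.

Lemma ginv_conf s x a b : U x ->
  ginv (conf_metric g s) x a b = (expR (2 * s x))^-1 * ginv g x a b.
Proof.
move=> Ux; rewrite /ginv /conf_metric invmxZ ?mxE //.
by rewrite unitmxZ ?g_unit // unitfE gt_eqF // expR_gt0.
Qed.

Lemma grad_conf s u x : U x ->
  grad (conf_metric g s) u x = (expR (2 * s x))^-1 *: grad g u x.
Proof.
move=> Ux; apply/rowP => i; rewrite !mxE mulr_sumr.
by apply: eq_bigr => j _; rewrite ginv_conf // mulrA.
Qed.

Lemma gip_conf s x a b :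
  gip (conf_metric g s) x a b = expR (2 * s x) * gip g x a b.
Proof. by rewrite /gip /conf_metric -scalemxAr -scalemxAl mxE. Qed.

Lemma pd_conf_metric s x a b c : smooth_on U s -> U x ->
  pd a (fun z => conf_metric g s z b c) x =
  expR (2 * s x) * (2 * pd a s x) * g x b c + expR (2 * s x) * pd a (fun z => g z b c) x.
Proof.
move=> sms Ux.
have -> : (fun z => conf_metric g s z b c) = (fun z => expR (2 * s z) * g z b c).
  by apply: funext => z; rewrite /conf_metric mxE.
rewrite pdM ?pd_expRM //; last exact: derivable_at_g.
- exact: (sms [::]).
- by apply: differentiable_derivable_at; apply: differentiable_expRM; apply: (sms [::]).
Qed.

Lemma christoffel_conf s x k i j : smooth_on U s -> U x ->
  christoffel (conf_metric g s) k i j x = christoffel g k i j x + chr_diff_fun s k i j x.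
Proof.
move=> sms Ux.
have E0 : expR (2 * s x) != 0 by rewrite gt_eqF // expR_gt0.
rewrite /christoffel; under eq_bigr do rewrite ginv_conf // !pd_conf_metric //.
exact: (@chr_conf_alg R n (g_at x) (ginv_at x) (dg_at x) (ds_at s x)
   (g_sym Ux) (ginv_g Ux) _ k i j E0).
Qed.

Lemma derivable_at_christoffel x k i j : U x -> derivable_at (christoffel g k i j) x.
Proof.
move=> Ux; apply: derivable_atM; first exact: derivable_at_cst.
apply: derivable_at_sum => l _; apply: derivable_atM; first exact: derivable_at_ginv.
by apply: derivable_atB; [apply: derivable_atD|]; apply: derivable_at_pd_g.
Qed.

Lemma derivable_at_grad_comp s x k :
  smooth_on U s -> U x -> derivable_at (grad_comp s k) x.
Proof.
move=> sms Ux; apply: derivable_at_sum => l _.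
by apply: derivable_atM; [exact: derivable_at_ginv | exact: smooth_pd_derivable_at].
Qed.

Lemma derivable_at_delta_pd (a b : 'I_n) s j x : smooth_on U s -> U x ->
  derivable_at (fun z => (a == b)%:R * pd j s z) x.
Proof.
by move=> sms Ux; apply: derivable_atM; [exact: derivable_at_cst | exact: smooth_pd_derivable_at].
Qed.

Lemma derivable_at_chr_diff_fun s x k i j :
  smooth_on U s -> U x -> derivable_at (chr_diff_fun s k i j) x.
Proof.
move=> sms Ux; apply: derivable_atB.
  by apply: derivable_atD; apply: derivable_at_delta_pd.
by apply: derivable_atM; [exact: derivable_at_g | exact: derivable_at_grad_comp].
Qed.

Lemma pd_chr_diff_fun s x q k i j : smooth_on U s -> U x ->
  pd q (chr_diff_fun s k i j) x =
  d_chr_diff R n (g_at x) (ginv_at x) (dg_at x) (ds_at s x) (dds_at s x) q k i j.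
Proof.
move=> sms Ux; rewrite /chr_diff_fun /d_chr_diff /dS_up /dH.
rewrite pdB; first last.
- by apply: derivable_atM; [exact: derivable_at_g | exact: derivable_at_grad_comp].
- by apply: derivable_atD; apply: derivable_at_delta_pd.
rewrite pdD; [| exact: derivable_at_delta_pd | exact: derivable_at_delta_pd].
rewrite !pdMl; try exact: smooth_pd_derivable_at.
rewrite pdM; [| exact: derivable_at_g | exact: derivable_at_grad_comp].
rewrite pd_sum; last first.
  by move=> l _; apply: derivable_atM; [exact: derivable_at_ginv | exact: smooth_pd_derivable_at].
congr (_ + _ - (_ + _ * _)); apply: eq_bigr => l _.
by rewrite pdM ?pd_ginv //; [exact: derivable_at_ginv | exact: smooth_pd_derivable_at].
Qed.

Lemma pd_christoffel_conf s x q k i j : smooth_on U s -> U x ->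
  pd q (christoffel (conf_metric g s) k i j) x =
  pd q (christoffel g k i j) x + pd q (chr_diff_fun s k i j) x.
Proof.
move=> sms Ux.
rewrite (@pd_near _ _ _ _ (fun y => christoffel g k i j y + chr_diff_fun s k i j y)).
  by rewrite pdD //; [exact: derivable_at_christoffel | exact: derivable_at_chr_diff_fun].
by apply: filterS (near_U Ux) => y Uy; apply: christoffel_conf.
Qed.

Lemma ricci_conf s x i j : smooth_on U s -> U x ->
  ricci (conf_metric g s) i j x = ricci g i j x +
  \sum_k (d_chr_diff R n (g_at x) (ginv_at x) (dg_at x) (ds_at s x) (dds_at s x) k k i j
      - d_chr_diff R n (g_at x) (ginv_at x) (dg_at x) (ds_at s x) (dds_at s x) j k i k
      + \sum_l ((christoffel g k k l x + chr_diff_fun s k k l x)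
                * (christoffel g l i j x + chr_diff_fun s l i j x)
              - (christoffel g k j l x + chr_diff_fun s k j l x)
                * (christoffel g l i k x + chr_diff_fun s l i k x)
              - (christoffel g k k l x * christoffel g l i j x
                 - christoffel g k j l x * christoffel g l i k x))).
Proof.
move=> sms Ux.
(* [ring] is slow on the geometric subterms, so regroupings are proved on fresh variables. *)
have regroup (a b c e F G K : R) :
  F = G + K -> a + b - (c + e) + F = a - c + G + (b - e + K) by move=> ->; ring.
rewrite /ricci -big_split /=; apply: eq_bigr => k _.
rewrite !pd_christoffel_conf // !pd_chr_diff_fun //.
under eq_bigr do rewrite !christoffel_conf //.
by apply: regroup; rewrite -big_split; apply: eq_bigr => l _; rewrite /= addrC subrK.
Qed.

Lemma dg_at_sym {x} : U x -> forall k i j, dg_at x k i j = dg_at x k j i.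
Proof.
move=> Ux k i j; apply: pd_near.
by apply: filterS (near_U Ux) => y Uy; apply: g_sym.
Qed.

Lemma gip_gradE u w x : U x ->
  gip g x (grad g u x) (grad g w x) = \sum_k pd k u x * grad_comp w k x.
Proof.
move=> Ux; rewrite /gip /grad !mxE.
apply: eq_bigr => b _; rewrite !mxE; congr (_ * _).
transitivity (\sum_k g x k b * grad_comp u k x).
  by apply: eq_bigr => a _; rewrite mxE mulrC.
exact: (@G_S_up' R n (g_at x) (ginv_at x) (ds_at u x) (g_sym Ux) (ginv_sym Ux) (ginv_g Ux)).
Qed.

Lemma grad_comp_gipE s u x : U x ->
  \sum_k grad_comp s k x * pd k u x = gip g x (grad g s x) (grad g u x).
Proof.
move=> Ux; rewrite gip_gradE // /grad_comp.
under eq_bigr do rewrite mulr_suml.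
under [RHS]eq_bigr do rewrite mulr_sumr.
rewrite [RHS]exchange_big; apply: eq_bigr => k _; apply: eq_bigr => l _.
by rewrite (ginv_sym Ux k l) -mulrA mulrCA.
Qed.

Lemma scal_conf s x : smooth_on U s -> U x ->
  scal (conf_metric g s) x = (expR (2 * s x))^-1 * (scal g x
    - 2 * (n%:R - 1) * lap g s x
    - (n%:R - 1) * (n%:R - 2) * gip g x (grad g s x) (grad g s x)).
Proof.
move=> sms Ux.
have distr (e h r q : R) : e * h * (r + q) = e * (h * r) + e * (h * q) by ring.
rewrite /scal; under eq_bigr do under eq_bigr do rewrite ginv_conf // ricci_conf // distr.
rewrite sumr2D; under eq_bigr do rewrite -mulr_sumr.
under [X in _ + X]eq_bigr do rewrite -mulr_sumr.
rewrite -!mulr_sumr -mulrDr; congr (_ * _).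
rewrite (@scal_conf_alg R n (g_at x) (ginv_at x) (dg_at x) (ds_at s x) (dds_at s x)
   (g_sym Ux) (ginv_sym Ux) (ginv_g Ux) (dg_at_sym Ux)) gip_gradE //.
by rewrite mulNr addrA.
Qed.

Lemma lap_conf s u x : smooth_on U s -> U x ->
  lap (conf_metric g s) u x = (expR (2 * s x))^-1 *
    (lap g u x + (n%:R - 2) * gip g x (grad g s x) (grad g u x)).
Proof.
move=> sms Ux.
have distr (e h a b c : R) : e * h * (a - (b + c)) = e * (h * (a - b)) - e * (h * c).
  by ring.
rewrite /lap; under eq_bigr do under eq_bigr do rewrite ginv_conf //.
under eq_bigr do under eq_bigr do under eq_bigr do rewrite christoffel_conf // mulrDl.
under eq_bigr do under eq_bigr do rewrite big_split /= distr.
rewrite sumr2B; under eq_bigr do rewrite -mulr_sumr.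
under [X in _ - X]eq_bigr do rewrite -mulr_sumr.
rewrite -!mulr_sumr -mulrBr; congr (_ * _).
rewrite (@contr_chr_diff_vec R n (g_at x) (ginv_at x) (ds_at s x)
   (g_sym Ux) (ginv_sym Ux) (ginv_g Ux) (fun k => pd k u x)) -grad_comp_gipE //.
by rewrite -mulNr opprB.
Qed.

Lemma pd_expRM_mul (s f : V -> R) c j x : smooth_on U s -> smooth_on U f -> U x ->
  pd j (fun z => expR (c * s z) * f z) x =
  expR (c * s x) * (c * pd j s x * f x + pd j f x).
Proof.
move=> sms smf Ux.
rewrite pdM; first last.
- exact: smooth_derivable_at.
- by apply: differentiable_derivable_at; apply: differentiable_expRM; apply: (sms [::]).
by rewrite pd_expRM -?mulrA -?mulrDr //; apply: (sms [::]).
Qed.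

Lemma pd2_expRM_mul (s f : V -> R) c i j x : smooth_on U s -> smooth_on U f -> U x ->
  pd i (pd j (fun z => expR (c * s z) * f z)) x =
  expR (c * s x) * (c ^+ 2 * pd i s x * pd j s x * f x + c * pd i s x * pd j f x
     + c * pd j s x * pd i f x + c * f x * pd i (pd j s) x + pd i (pd j f) x).
Proof.
move=> sms smf Ux.
have expand (E Si Sj F fi fj SSij ffij : R) :
  E * (c * Si) * (c * Sj * F + fj) + E * (c * SSij * F + c * Sj * fi + ffij) =
  E * (c ^+ 2 * Si * Sj * F + c * Si * fj + c * Sj * fi + c * F * SSij + ffij).
  by ring.
have De : derivable_at (fun z => expR (c * s z)) x.
  by apply: differentiable_derivable_at; apply: differentiable_expRM; apply: (sms [::]).
have D1 : derivable_at (fun z => c * pd j s z) x.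
  by apply: derivable_atM; [exact: derivable_at_cst | exact: smooth_pd_derivable_at].
have D2 : derivable_at (fun z => c * pd j s z * f z) x.
  by apply: derivable_atM; [exact: D1 | exact: smooth_derivable_at].
have D3 : derivable_at (pd j f) x by exact: smooth_pd_derivable_at.
rewrite (@pd_near _ _ _ _ (fun z => expR (c * s z) * (c * pd j s z * f z + pd j f z))).
  rewrite (pdM _ De (derivable_atD D2 D3)) (pd_expRM _ _ (sms [::] x Ux)).
  rewrite (pdD _ D2 D3) (pdM _ D1 (smooth_derivable_at smf Ux)).
  by rewrite (pdMl _ _ (smooth_pd_derivable_at _ sms Ux)) expand.
by apply: filterS (near_U Ux) => z Uz; apply: pd_expRM_mul.
Qed.

Lemma lap_expRM_mul (s f : V -> R) c x : smooth_on U s -> smooth_on U f -> U x ->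
  lap g (fun z => expR (c * s z) * f z) x = expR (c * s x) *
   (c ^+ 2 * gip g x (grad g s x) (grad g s x) * f x
    + 2 * c * gip g x (grad g s x) (grad g f x) + c * f x * lap g s x + lap g f x).
Proof.
move=> sms smf Ux.
rewrite gip_gradE // -grad_comp_gipE // {1}/lap.
under eq_bigr do under eq_bigr do rewrite pd2_expRM_mul //.
under eq_bigr do under eq_bigr do under eq_bigr do rewrite pd_expRM_mul //.
exact: (@lap_exp_mul_alg R n (ginv_at x) (dg_at x) (ds_at s x) (dds_at s x)
   (ginv_sym Ux) (expR (c * s x)) c (f x) (fun k => pd k f x)
   (fun i j => pd i (pd j f) x)).
Qed.

Lemma grad_expRM_mul (s f : V -> R) c x : smooth_on U s -> smooth_on U f -> U x ->
  grad g (fun z => expR (c * s z) * f z) x =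
  expR (c * s x) *: ((c * f x) *: grad g s x + grad g f x).
Proof.
move=> sms smf Ux.
have regroup (h E a F b : R) :
  h * (E * (c * a * F + b)) = E * (c * F * (h * a)) + E * (h * b) by ring.
apply/rowP => i; rewrite /grad !mxE.
under eq_bigr do rewrite pd_expRM_mul // regroup.
by rewrite big_split /= -!mulr_sumr mulrDr.
Qed.

Lemma tDW_conf (v sigma s : V -> R) (m mu w : R) x :
  smooth_on U v -> (forall y, U y -> 0 < v y) -> smooth_on U sigma ->
  smooth_on U s -> m != 1 - n%:R -> U x ->
  tDW (conf_metric g s) m mu (fun y => expR (s y) * v y) w
      (fun y => expR (w * s y) * sigma y) x
  = tractor_rescale g s (w - 1) (tDW g m mu v w sigma x) x.
Proof.
move=> smv v_gt0 smsig sms m1 Ux.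
have -> : (fun y => expR (s y) * v y) = (fun y => expR (1 * s y) * v y).
  by apply: funext => y; rewrite mul1r.
have E2 : expR (2 * s x) = expR (s x) ^+ 2 by rewrite -expRM_natl.
have Ew1 : expR ((w - 1) * s x) = expR (w * s x) / expR (s x).
  by rewrite mulrBl mul1r expRB.
have e0 : expR (s x) != 0 by rewrite gt_eqF // expR_gt0.
rewrite /tDW /tractor_rescale /tscale /=.
congr Tractor.
- by rewrite Ew1; move: (expR (w * s x)) (expR (s x)) e0 => a b b0; field.
- rewrite (grad_conf s _ x Ux) (grad_expRM_mul s sigma w x sms smsig Ux) E2 Ew1 expRN.
  rewrite !scalerDr !scalerA addrC.
  by congr (_ *: _ + _ *: _); move: (expR (w * s x)) (expR (s x)) e0 => a b b0; field.
rewrite /lapphi /JW /Rphi !lap_conf // scal_conf // !grad_conf // !gip_conf.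
rewrite !lap_expRM_mul // !grad_expRM_mul //.
rewrite !gipZl !gipZr !gipDl !gipDr !gipZl !gipZr.
rewrite (gipC g x (grad g v x) (grad g s x) (g_trmx Ux)).
rewrite E2 Ew1 expRN mul1r.
have v0 : v x != 0 by rewrite gt_eqF // v_gt0.
have mn : m + n%:R - 1 != 0 by apply: contra m1 => /eqP h; apply/eqP; lra.
(* [field] is only fast on atoms, so every geometric quantity is generalized first. *)
move: (gip g x (grad g s x) (grad g s x)) (gip g x (grad g s x) (grad g sigma x))
  (gip g x (grad g s x) (grad g v x)) (gip g x (grad g v x) (grad g sigma x))
  (gip g x (grad g v x) (grad g v x)) (lap g s x) (lap g sigma x) (lap g v x)
  (scal g x) (sigma x) (v x) v0 (expR (w * s x)) (expR (s x)) e0.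
move=> gss gssig gsv gvsig gvv Ls Lsig Lv Sc sig vx vx0 ews es es0.
by field; rewrite vx0 es0 mn.
Qed.

End ConformalChange.

Theorem lemma5p9 (R : realType) (n : nat) (U : set 'rV[R]_n)
  (g : 'rV[R]_n -> 'M[R]_n) (v : 'rV[R]_n -> R) (m mu : R) :
  (3 <= n)%N -> open U -> is_metric_on U g ->
  smooth_on U v -> (forall x, U x -> 0 < v x) ->
  m != - n%:R -> m != 1 - n%:R -> m != 2 - n%:R ->
  forall (w : R) (sigma : 'rV[R]_n -> R), smooth_on U sigma ->
  (forall x, U x ->
     tsub (tscale (n%:R + 2 * w - 2) (tDW g m mu v w sigma x))
          (tscale (m + n%:R + 2 * w - 2) (tD g w sigma x))
     = tscale (- m / v x *
          tmetric g x (tD g w sigma x)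
            (tadd (Jtr g v x)
               (tscale ((mu - (m - 1) * tmetric g x (Jtr g v x) (Jtr g v x))
                        / (2 * (m + n%:R - 1) * v x)) tX))) tX)
  /\
  (forall s : 'rV[R]_n -> R, smooth_on U s -> forall x, U x ->
     tDW (conf_metric g s) m mu (fun y => expR (s y) * v y) w
         (fun y => expR (w * s y) * sigma y) x
     = tractor_rescale g s (w - 1) (tDW g m mu v w sigma x) x).
Proof.
move=> n3 oU gm smv v_gt0 _ m1 _ w sigma smsig; split.
- by move=> x Ux; apply: tDW_sub_tD => //; [exact: (g_trmx _ _ gm Ux) | exact: v_gt0].
- by move=> s sms x Ux; apply: (tDW_conf _ _ oU gm).
Qed.
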